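(* Let $F\in\mathcal{SF}_n$ be a rooted spanning forest on $[n]$ with non-root vertices $v_1,\dots,v_k$ listed in some order. Define $F_0$ to be the forest on $[n]$ with no edges (all vertices roots), and for $i=1,\dots,k$ let $F_i$ be obtained from $F_{i-1}$ by adding the edge $\{v_i,p(v_i)\}$ and setting $R(F_i)=R(F_{i-1})\setminus\{v_i\}$, so $F_k=F$. Then $F_0\lessdot F_1\lessdot\cdots\lessdot F_k$ is a saturated chain in $\mathcal{SF}_n$ if and only if the listing $v_1,\dots,v_k$ is a linear extension, i.e. whenever $v_i$ is a descendant of $v_j$ in $F$ we have $i<j$.
   Context: A rooted spanning forest on $[n]$ is a spanning forest of the complete graph on $[n]$ with one distinguished vertex (root) in each connected component; $E(F)$ is its edge set and $R(F)$ its set of roots. $\mathcal{SF}_n$ is the set of such forests ordered by $F_1\le F_2$ iff $E(F_1)\subseteq E(F_2)$ and $R(F_2)\subseteq R(F_1)$; equivalently $F_1\lessdot F_2$ iff $F_2$ is obtained from $F_1$ by adding an edge $\{x,y\}$ between two roots $x,y\in R(F_1)$ (of different trees) and keeping exactly one of $x,y$ as root. For a non-root vertex $y$, its parent $p(y)$ is the neighbor of $y$ on the unique path from $y$ to the root of its component; $x$ is an ancestor of $y$ (and $y$ a descendant of $x$) if $x$ lies on the path from $y$ to its root. *)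

From mathcomp Require Import all_boot.
Set Implicit Arguments. Unset Strict Implicit. Unset Printing Implicit Defensive.

Section RSF.
Variable n : nat.
Notation V := 'I_n.

(* A rooted spanning forest is given by its edge set E(F) (rf_edges = 2-element
   subsets of [n]) and its root set R(F). *)
Definition rforest := ({set {set V}} * {set V})%type.
Definition rf_edges (F : rforest) := F.1.
Definition rf_roots (F : rforest) := F.2.

Definition adj (E : {set {set V}}) : rel V :=
  fun x y => (x != y) && ([set x; y] \in E).

Definition is_forest (E : {set {set V}}) : Prop :=
  (forall e, e \in E -> #|e| = 2) /\
  (forall s : seq V, uniq s -> 3 <= size s -> ~~ cycle (adj E) s).

Definition is_rsf (F : rforest) : Prop :=
  is_forest (rf_edges F) /\
  forall x : V, #|[set r in rf_roots F | connect (adj (rf_edges F)) x r]| = 1.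

(* s is the (vertex sequence after y of the) path from y to the root of its component *)
Definition root_path (F : rforest) (y : V) (s : seq V) : bool :=
  [&& path (adj (rf_edges F)) y s, uniq (y :: s) & last y s \in rf_roots F].

Definition is_parent (F : rforest) (p y : V) : Prop :=
  exists s, root_path F y (p :: s).

Definition is_ancestor (F : rforest) (x y : V) : Prop :=
  exists s, root_path F y s /\ x \in y :: s.

Definition covers (F1 F2 : rforest) : Prop :=
  exists x y : V,
    [/\ x \in rf_roots F1, y \in rf_roots F1,
        ~~ connect (adj (rf_edges F1)) x y,
        rf_edges F2 = [set x; y] |: rf_edges F1 &
        rf_roots F2 = rf_roots F1 :\ y \/ rf_roots F2 = rf_roots F1 :\ x].

Definition Fi (p : V -> V) (v : seq V) (i : nat) : rforest :=
  ([set [set x; p x] | x in take i v], ~: [set x in take i v]).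

Definition saturated_chain (p : V -> V) (v : seq V) : Prop :=
  (forall i, i <= size v -> is_rsf (Fi p v i)) /\
  (forall i, i < size v -> covers (Fi p v i) (Fi p v i.+1)).

Definition linear_extension (F : rforest) (v : seq V) : Prop :=
  forall x y, x \in v -> y \in v -> x != y ->
    is_ancestor F y x -> index x v < index y v.

End RSF.

(* Adding the edge {v_i, p(v_i)} to F_(i-1) is a cover relation exactly when
   p(v_i) <> v_i is still a root of F_(i-1), i.e. when p(v_i) is a root of F or
   is listed after v_i.  Conversely, if every vertex is listed before its parent,
   the position in the listing strictly increases along parent edges, and such a
   rank makes every F_i a rooted forest.  Finally, root paths in F are unique and
   therefore follow the parent map, so listing each vertex before its parent is
   the same as listing it before all its ancestors. *)

From mathcomp Require Import all_boot.
Set Implicit Arguments. Unset Strict Implicit. Unset Printing Implicit Defensive.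

Section Forests.
Variable n : nat.
Notation V := 'I_n.
Implicit Types (E : {set {set V}}) (a b x y : V) (s t : seq V).

Lemma adj_sym E : symmetric (adj E).
Proof. by move=> x y; rewrite /adj eq_sym setUC. Qed.

Lemma forest_path_head E a s1 s2 : is_forest E ->
  path (adj E) a s1 -> path (adj E) a s2 -> uniq (a :: s1) -> uniq (a :: s2) ->
  s1 != [::] -> s2 != [::] -> last a s1 = last a s2 -> head a s1 = head a s2.
Proof.
move=> [_ acyclic] path1 path2 uniq1 uniq2 ne1 ne2 same_last.
have common : has (mem s1) s2.
  apply/hasP; exists (last a s2); first by case: (s2) ne2 => // u t _ /=; exact: mem_last.
  by rewrite -same_last; case: (s1) ne1 => // u t _ /=; exact: mem_last.
move: path2 uniq2; case/split_find: common => z m r /= zs1 m_s1 path2 uniq2.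
move: m_s1 path1 uniq1; case/path.splitP: zs1 => p1 p2 m_s1 path1 uniq1.
have [/andP[/eqP-> /eqP->] // | not_both] := boolP ((p1 == [::]) && (m == [::])).
set c := a :: rcons p1 z ++ rev m.
have size_c : 3 <= size c.
  by rewrite /c /= size_cat size_rcons size_rev; case: (p1) (m) not_both => [|? ?] [|? ?].
have uniq_c : uniq c.
  move: uniq1 uniq2; rewrite /c -!cat_cons !cat_uniq rev_uniq has_rev.
  case/and3P=> -> _ _ /and4P[a_mzr uniq_mz _ _] /=.
  move: uniq_mz; rewrite rcons_uniq => /andP[_ ->]; rewrite andbT.
  apply/hasPn => y ym; rewrite inE negb_or; apply/andP; split.
    by apply: contraNneq a_mzr => <-; rewrite mem_cat mem_rcons inE ym orbT.
  by apply: contra (hasPn m_s1 y ym) => /= y_p1; rewrite mem_cat y_p1.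
have : cycle (adj E) c.
  rewrite /c /= rcons_cat cat_path last_rcons.
  move: path1 path2; rewrite !cat_path => /andP[-> _] /andP[path_mz _] /=.
  move: path_mz; rewrite -rev_path belast_rcons last_rcons rev_cons.
  by rewrite (@eq_path _ _ (adj E)) // => x y; rewrite /= adj_sym.
by rewrite (negbTE (acyclic c uniq_c size_c)).
Qed.

Section RootedForest.
Variable F : rforest n.
Hypothesis rsfF : is_rsf F.

Lemma root_path_connect y s : root_path F y s -> connect (adj (rf_edges F)) y (last y s).
Proof. by case/and3P=> path_s _ _; apply/connectP; exists s. Qed.

Lemma rsf_root_uniq x r1 r2 : r1 \in rf_roots F -> r2 \in rf_roots F ->
  connect (adj (rf_edges F)) x r1 -> connect (adj (rf_edges F)) x r2 -> r1 = r2.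
Proof.
move=> r1R r2R x_r1 x_r2; case: rsfF => _ /(_ x)/eqP/cards1P [r0 roots_x].
suff to_r0 r : r \in rf_roots F -> connect (adj (rf_edges F)) x r -> r = r0.
  by rewrite (to_r0 r1) // (to_r0 r2).
by move=> rR x_r; apply/set1P; rewrite -roots_x inE rR x_r.
Qed.

Lemma root_path_of_root r s : r \in rf_roots F -> root_path F r s -> s = [::].
Proof.
move=> rR; case: s => // u s rp; have [_ uniq_rs last_R] := and3P rp.
have := rsf_root_uniq rR last_R (connect0 _ r) (root_path_connect rp).
by move=> r_last; move: uniq_rs; rewrite /= {1}r_last /= mem_last.
Qed.

Lemma root_path_head y u1 u2 s1 s2 :
  root_path F y (u1 :: s1) -> root_path F y (u2 :: s2) -> u1 = u2.
Proof.
move=> rp1 rp2; have [path1 uniq1 last1] := and3P rp1.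
have [path2 uniq2 last2] := and3P rp2.
have := rsf_root_uniq last1 last2 (root_path_connect rp1) (root_path_connect rp2).
exact: forest_path_head rsfF.1 path1 path2 uniq1 uniq2 isT isT.
Qed.

Lemma root_path_behead y u s : root_path F y (u :: s) -> root_path F u s.
Proof. by case/and3P=> /= /andP[_ path_s] /andP[_ uniq_s] last_s; apply/and3P. Qed.

Variables (p : V -> V) (f : V -> nat).
Hypothesis parentP : forall y, y \notin rf_roots F -> is_parent F (p y) y.
Hypothesis rank_parent : forall y, y \notin rf_roots F -> f y < f (p y).

Lemma root_path_rank x s y : root_path F x s -> y \in s -> f x < f y.
Proof.
elim: s x => // u s IHs x rp.
have xNR : x \notin rf_roots F.
  by apply: contraTN rp => xR; apply/negP => /(root_path_of_root xR).
have [s' rp'] := parentP xNR.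
have f_xu : f x < f u by rewrite (root_path_head rp rp'); exact: rank_parent.
rewrite inE => /predU1P[-> // | ys].
exact: ltn_trans f_xu (IHs u (root_path_behead rp) ys).
Qed.

End RootedForest.

Section ParentForest.
Variable p : V -> V.

Definition parent_edges (t : seq V) : {set {set V}} := [set [set x; p x] | x in t].
Definition parent_forest (t : seq V) : rforest n := (parent_edges t, ~: [set x in t]).

Lemma adj_parent_edges t a b : adj (parent_edges t) a b ->
  (a \in t /\ b = p a) \/ (b \in t /\ a = p b).
Proof.
case/andP=> + /imsetP[x xt edge_x].
have : a \in [set x; p x] by rewrite -edge_x set21.
have : b \in [set x; p x] by rewrite -edge_x set22.
case/set2P=> -> /set2P[] ->; rewrite ?eqxx // => _; [right | left]; by split.
Qed.

Lemma parent_edges_rcons t x : parent_edges (rcons t x) = [set x; p x] |: parent_edges t.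
Proof.
apply/setP => e; rewrite in_setU1; apply/imsetP/predU1P => [[z]|[->|/imsetP[z zt ->]]].
- by rewrite mem_rcons inE => /predU1P[-> ->|zt ->]; [left | right; exact: imset_f].
- by exists x; rewrite // mem_rcons mem_head.
- by exists z; rewrite // mem_rcons inE zt orbT.
Qed.

(* A simple path entering [b] from its parent can only continue downwards, to children. *)
Lemma parent_edges_path_from_child t b s : b \in t ->
  path (adj (parent_edges t)) b s -> uniq [:: p b, b & s] -> last b s \in t.
Proof.
elim: s b => // c s IHs b bt /= /andP[b_c path_s] /andP[pbN uniq_bcs].
case: (adj_parent_edges b_c) => [[_ c_pb] | [ct b_pc]].
  by rewrite c_pb !inE eqxx !orbT in pbN.
by apply: (IHs c ct path_s); rewrite -b_pc.
Qed.

Lemma parent_edges_connect_outside_eq t a b : a \notin t -> b \notin t ->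
  connect (adj (parent_edges t)) a b -> a = b.
Proof.
move=> aNt bNt /connectP[s0 path_s0 b_last]; rewrite b_last in bNt *.
case/shortenP: path_s0 bNt => [[|c s]] //= /andP[a_c path_s] uniq_acs _ lastNt.
case: (adj_parent_edges a_c) => [[a_t _] | [ct a_pc]]; first by rewrite a_t in aNt.
rewrite a_pc in uniq_acs.
by have := parent_edges_path_from_child ct path_s uniq_acs; rewrite (negbTE lastNt).
Qed.

Section Ranked.
Variables (f : V -> nat) (t : seq V).
Hypothesis rank_parent : {in t, forall x, f x < f (p x)}.

Lemma parent_neq x : x \in t -> p x != x.
Proof. by move/rank_parent; apply: contraTneq => ->; rewrite ltnn. Qed.

(* The vertex of minimal rank on a cycle would need a child among its two neighbours. *)
Lemma parent_edges_acyclic s : uniq s -> 3 <= size s -> ~~ cycle (adj (parent_edges t)) s.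
Proof.
move=> uniq_s size_s; apply/negP => cycle_s.
have [w0 w0s] : {w0 | w0 \in s} by case: (s) size_s => // w0 ? _; exists w0; exact: mem_head.
case: (arg_minnP f w0s) => w ws w_min.
case/rot_to: ws => k s' rot_s.
have : uniq (w :: s') by rewrite -rot_s rot_uniq.
have : cycle (adj (parent_edges t)) (w :: s') by rewrite -rot_s rot_cycle.
have : {subset w :: s' <= s} by move=> y; rewrite -rot_s mem_rot.
have : 3 <= size (w :: s') by rewrite -rot_s size_rot.
case: s' {rot_s} => [|a [|b s']] // _ sub_s.
rewrite /= rcons_path => /and3P[w_a _ /andP[_ z_w]] /and4P[_ a_s _ _].
have no_child d : d \in s -> adj (parent_edges t) w d -> d = p w.
  move=> ds /adj_parent_edges[[_ //] | [dt w_pd]].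
  by have := w_min d ds; rewrite w_pd leqNgt rank_parent.
have a_pw : a = p w by apply: no_child (sub_s a _) w_a; rewrite !inE eqxx orbT.
have z_pw : last b s' = p w.
  apply: no_child; first by apply: sub_s; rewrite 2!inE mem_last !orbT.
  by rewrite adj_sym.
by move: a_s; rewrite a_pw -z_pw mem_last.
Qed.

Lemma parent_edges_forest : is_forest (parent_edges t).
Proof.
split; last exact: parent_edges_acyclic.
by move=> e /imsetP[x xt ->]; rewrite cards2 eq_sym parent_neq.
Qed.

(* A vertex of maximal rank in the component of [x] has no parent edge: its parent would rank higher. *)
Lemma parent_edges_connect_outside x : exists2 r, r \notin t & connect (adj (parent_edges t)) x r.
Proof.
case: (arg_maxnP f (connect0 (adj (parent_edges t)) x)) => r x_r r_max.
exists r => //; apply/negP => rt.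
have x_pr : connect (adj (parent_edges t)) x (p r).
  apply: connect_trans x_r (connect1 _).
  by rewrite /adj eq_sym parent_neq //=; apply: imset_f.
by have := r_max _ x_pr; rewrite /= leqNgt rank_parent.
Qed.

Lemma parent_forest_rsf : is_rsf (parent_forest t).
Proof.
split; first exact: parent_edges_forest.
move=> x; have [r0 r0Nt x_r0] := parent_edges_connect_outside x.
apply/eqP/cards1P; exists r0; apply/setP => r; rewrite !inE.
apply/andP/eqP => [[rNt x_r] | ->]; last by [].
apply/esym/(parent_edges_connect_outside_eq r0Nt rNt).
by apply: connect_trans x_r; rewrite (sym_connect_sym (@adj_sym _)).
Qed.

End Ranked.

Lemma parent_forest_covers t x : x \notin t -> p x \notin t -> p x != x ->
  covers (parent_forest t) (parent_forest (rcons t x)).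
Proof.
move=> xNt pxNt px_x; exists (p x), x; split; rewrite /rf_roots /rf_edges /= ?inE //.
- by apply/negP => /(parent_edges_connect_outside_eq pxNt xNt); exact/eqP.
- by rewrite parent_edges_rcons [[set x; _]]setUC.
- by left; apply/setP => z; rewrite !inE mem_rcons inE negb_or.
Qed.

Lemma parent_forest_covers_inv t x :
  covers (parent_forest t) (parent_forest (rcons t x)) -> p x \notin t /\ p x != x.
Proof.
case=> a [b [aR bR a_b_disc edges _]]; move: aR bR edges.
rewrite /rf_roots /rf_edges /= !inE => aNt bNt edges.
have a_b : a != b by apply: contraNneq a_b_disc => ->; exact: connect0.
have ab_new : [set a; b] \notin parent_edges t.
  by apply: contra a_b_disc => ab_old; apply: connect1; rewrite /adj a_b.
have ab_xpx : [set a; b] = [set x; p x].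
  have := setU11 [set a; b] (parent_edges t).
  by rewrite -edges parent_edges_rcons in_setU1 (negbTE ab_new) orbF => /eqP.
split.
- by have /set2P[-> | ->] : p x \in [set a; b] by rewrite ab_xpx set22.
- apply: contraNneq a_b => px_x; move: ab_xpx; rewrite px_x setUid => ab_x.
  have /set1P-> : a \in [set x] by rewrite -ab_x set21.
  by have /set1P-> : b \in [set x] by rewrite -ab_x set22.
Qed.

End ParentForest.
End Forests.

(* A parent outside [v] (a root of [F]) has index [size v]: it counts as listed last. *)
Definition parents_later n (p : 'I_n -> 'I_n) (v : seq 'I_n) : Prop :=
  {in v, forall x, index x v < index (p x) v}.

Lemma saturated_chainP n (p : 'I_n -> 'I_n) v :
  uniq v -> saturated_chain p v <-> parents_later p v.
Proof.
move=> uniq_v; split=> [[_ chain_covers] x xv | later].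
  have xi : index x v < size v by rewrite index_mem.
  have := chain_covers _ xi; rewrite /Fi (take_nth x xi) nth_index //.
  case/(parent_forest_covers_inv (p := p)) => pxN px_x.
  rewrite in_take_leq ?(ltnW xi) // -leqNgt in pxN.
  rewrite ltn_neqAle pxN andbT; apply: contra px_x => /eqP idx_eq; apply/eqP.
  have pxv : p x \in v by rewrite -index_mem -idx_eq.
  by rewrite -(nth_index x pxv) -idx_eq nth_index.
have later_take i : {in take i v, forall x, index x v < index (p x) v}.
  by move=> x /mem_take; exact: later.
split=> [i _ | i i_lt]; first exact: parent_forest_rsf (later_take i).
have x0 : 'I_n by case: (v) i_lt => [// | x0 _ _]; exact: x0.
have x_idx : index (nth x0 v i) v = i by exact: index_uniq.
have later_x := later _ (mem_nth x0 i_lt); rewrite x_idx in later_x.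
have i_le := ltnW i_lt.
rewrite /Fi (take_nth x0 i_lt); apply: parent_forest_covers.
- by rewrite in_take_leq // x_idx ltnn.
- by rewrite in_take_leq // -leqNgt ltnW.
- by apply: contraTneq later_x => ->; rewrite x_idx ltnn.
Qed.

Lemma linear_extensionP n (F : rforest n) (p : 'I_n -> 'I_n) v :
  is_rsf F -> (forall y, y \notin rf_roots F -> is_parent F (p y) y) ->
  (forall x, (x \in v) = (x \notin rf_roots F)) ->
  linear_extension F v <-> parents_later p v.
Proof.
move=> rsfF parentP v_nonroots; split=> [lin_ext x xv | later x y xv yv x_y [s [rp ys]]].
  have [pxv | pxNv] := boolP (p x \in v); last by rewrite (memNindex pxNv) index_mem.
  have [s rp] : is_parent F (p x) x by apply: parentP; rewrite -v_nonroots.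
  apply: lin_ext => //; last by exists (p x :: s); rewrite !inE eqxx orbT.
  by case/and3P: rp => _ /andP[+ _]; rewrite inE negb_or => /andP[].
have rank_parent z : z \notin rf_roots F -> index z v < index (p z) v.
  by rewrite -v_nonroots; exact: later.
apply: (root_path_rank rsfF parentP rank_parent rp).
by move: ys; rewrite inE eq_sym (negbTE x_y).
Qed.

Theorem lemma5p11 (n : nat) (F : rforest n) (p : 'I_n -> 'I_n) (v : seq 'I_n) :
  is_rsf F ->
  (forall y, y \notin rf_roots F -> is_parent F (p y) y) ->
  uniq v ->
  (forall x, (x \in v) = (x \notin rf_roots F)) ->
  saturated_chain p v <-> linear_extension F v.
Proof.
move=> rsfF parentP uniq_v v_nonroots.
apply: iff_trans (saturated_chainP p uniq_v) _.
exact: iff_sym (linear_extensionP rsfF parentP v_nonroots).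
Qed.
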